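(* Suppose the access structure $\mathcal{A}\subseteq 2^P$ is connected and the polymatroid $\mathcal M=(f,sP)$ realizes $\mathcal{A}$. If $i\in P$ satisfies $f(i)=f(s)$, then $\mathcal M$ is tight at $i$, i.e. $f(sP)=f(sP\setminus\{i\})$.
   Context: A polymatroid $(f,M)$ consists of a finite set $M$ and a function $f$ on subsets of $M$ with $f(\emptyset)=0$ that is non-negative, monotone and submodular. It is tight at $i\in M$ if $f(M)=f(M\setminus\{i\})$. An access structure on a finite set $P$ is a non-empty upward-closed $\mathcal{A}\subseteq 2^P$ with $\emptyset\notin\mathcal{A}$. A participant $i$ is important if some $A\notin\mathcal{A}$ has $A\cup\{i\}\in\mathcal{A}$; $\mathcal{A}$ is connected if every participant is important. Let $s\notin P$; juxtaposition denotes union. A polymatroid $(f,sP)$ realizes $\mathcal{A}$ if for every $A\subseteq P$: $A\in\mathcal{A}$ iff $f(sA)=f(A)$, and $A\notin\mathcal{A}$ iff $f(sA)=f(A)+f(s)$. *)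

From HB Require Import structures.
From mathcomp Require Import all_boot all_order all_algebra.
Set Implicit Arguments. Unset Strict Implicit. Unset Printing Implicit Defensive.
Import Order.TTheory GRing.Theory Num.Theory.
Local Open Scope ring_scope.

(* Polymatroid (f, M): ground set M : {set T}, f defined on subsets of M
   (values of f outside subsets of M are irrelevant), real-valued. *)
Definition polymatroid (R : realFieldType) (T : finType)
    (f : {set T} -> R) (M : {set T}) : Prop :=
  [/\ f set0 = 0,
      (forall A : {set T}, A \subset M -> 0 <= f A),
      (forall A B : {set T}, A \subset B -> B \subset M -> f A <= f B) &
      (forall A B : {set T}, A \subset M -> B \subset M ->
         f (A :|: B) + f (A :&: B) <= f A + f B)].

Definition tight_at (R : realFieldType) (T : finType)
    (f : {set T} -> R) (M : {set T}) (i : T) : Prop :=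
  f M = f (M :\ i).

Definition access_structure (T : finType) (P : {set T}) (A : {set {set T}}) : Prop :=
  [/\ (forall X : {set T}, X \in A -> X \subset P),
      A != set0,
      set0 \notin A &
      (forall X Y : {set T}, X \in A -> X \subset Y -> Y \subset P -> Y \in A)].

Definition important (T : finType) (P : {set T}) (A : {set {set T}}) (i : T) : Prop :=
  exists X : {set T}, [/\ X \subset P, X \notin A & i |: X \in A].

Definition connected_as (T : finType) (P : {set T}) (A : {set {set T}}) : Prop :=
  forall i, i \in P -> important P A i.

Definition realizes (R : realFieldType) (T : finType) (f : {set T} -> R)
    (s : T) (P : {set T}) (A : {set {set T}}) : Prop :=
  forall X : {set T}, X \subset P ->
    (X \in A <-> f (s |: X) = f X) /\ (X \notin A <-> f (s |: X) = f X + f [set s]).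

From HB Require Import structures.
From mathcomp Require Import all_boot all_order all_algebra.
Import Order.TTheory GRing.Theory Num.Theory.
Set Implicit Arguments. Unset Strict Implicit. Unset Printing Implicit Defensive.
Local Open Scope ring_scope.

(* Take X witnessing that i is important: X is unauthorized and i |: X is
   authorized.  By subadditivity and f(i) <= f(s),
   f(s,i,X) = f(i,X) <= f(i) + f(X) <= f(s) + f(X) = f(s,X),
   so i adds nothing to s |: X.  By submodularity (diminishing returns) i then
   adds nothing to any larger set, in particular to (s |: P) :\ i. *)

Section Polymatroid.

Variables (R : realFieldType) (T : finType) (f : {set T} -> R) (M : {set T}).
Hypothesis fM : polymatroid f M.

Lemma polymatroid_subadd (X Y : {set T}) :
  X \subset M -> Y \subset M -> f (X :|: Y) <= f X + f Y.
Proof.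
case: fM => _ f_ge0 _ f_submod XM YM.
apply: le_trans (f_submod _ _ XM YM); rewrite lerDl f_ge0 //.
exact: subset_trans (subsetIl _ _) XM.
Qed.

Lemma redundant_superset (i : T) (X Y : {set T}) :
  X \subset Y -> i |: Y \subset M -> f (i |: X) = f X -> f (i |: Y) = f Y.
Proof.
case: fM => _ _ f_mono f_submod XY iYM fiX.
have YM : Y \subset M by apply: subset_trans iYM; apply: subsetUr.
have iXM : i |: X \subset M by apply: subset_trans iYM; apply: setUS.
apply/eqP; rewrite eq_le (f_mono _ _ (subsetUr _ _) iYM) andbT.
have X_iXY : X \subset (i |: X) :&: Y by rewrite subsetI subsetUr XY.
have iXY_M : (i |: X) :&: Y \subset M by apply: subset_trans (subsetIr _ _) YM.
(* Submodularity on i |: X and Y, whose intersection contains X. *)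
have := f_submod _ _ iXM YM; rewrite -setUA (setUidPr XY) fiX.
move/(le_trans (lerD (lexx _) (f_mono _ _ X_iXY iXY_M))).
by rewrite addrC lerD2l.
Qed.

Lemma tight_at_of_redundant (i : T) (X : {set T}) :
  i \in M -> X \subset M :\ i -> f (i |: X) = f X -> tight_at f M i.
Proof.
move=> iM XMi fiX; rewrite /tight_at -{1}(setD1K iM).
by apply: redundant_superset XMi _ fiX; rewrite setD1K.
Qed.

End Polymatroid.

Lemma realizes_redundant (R : realFieldType) (T : finType) (s : T) (P : {set T})
    (A : {set {set T}}) (f : {set T} -> R) (i : T) (X : {set T}) :
  polymatroid f (s |: P) -> realizes f s P A ->
  X \subset P -> X \notin A -> i |: X \in A -> i \in P ->
  f [set i] <= f [set s] -> f (i |: (s |: X)) = f (s |: X).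
Proof.
move=> fM real XP XA iXA iP fis.
have iXP : i |: X \subset P by rewrite subUset sub1set iP XP.
have [_ [fsX _]] := real X XP; have [[fsiX _] _] := real _ iXP.
have siXM : i |: (s |: X) \subset s |: P.
  by rewrite subUset sub1set !inE iP orbT setUS.
have [_ _ f_mono _] := fM.
apply/eqP; rewrite eq_le.
rewrite (f_mono _ _ (subsetUr _ _) siXM) andbT setUCA fsiX // fsX // addrC.
apply: le_trans (polymatroid_subadd fM _ _) _.
- by rewrite sub1set !inE iP orbT.
- exact: subset_trans XP (subsetUr _ _).
- by rewrite lerD2r.
Qed.

Theorem corollary2p3 (R : realFieldType) (T : finType) (s : T) (P : {set T})
    (A : {set {set T}}) (f : {set T} -> R) (i : T) :
  s \notin P ->
  access_structure P A ->
  connected_as P A ->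
  polymatroid f (s |: P) ->
  realizes f s P A ->
  i \in P ->
  f [set i] = f [set s] ->
  tight_at f (s |: P) i.
Proof.
move=> sP _ conn fM real iP fis.
have [X [XP XA iXA]] := conn i iP.
have iX : i \notin X.
  by apply: contra XA => iX; rewrite -(setUidPr (_ : [set i] \subset X)) ?sub1set.
have si : s != i by apply: contraNneq sP => ->.
apply: (tight_at_of_redundant fM (X := s |: X)).
- by rewrite !inE iP orbT.
- apply/subsetP=> y; rewrite !inE => /orP[/eqP-> | yX]; first by rewrite si eqxx.
  by rewrite (subsetP XP) // orbT andbT; apply: contraNneq iX => <-.
- by apply: realizes_redundant fM real XP XA iXA iP _; rewrite fis lexx.
Qed.
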